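(* $R_2(VC)=9$ and $R_3(VC)>521$: every 2-coloring of $[9]$ contains two integers of the same color differing by a positive perfect cube, there is a 2-coloring of $[8]$ with no such pair, and there is a 3-coloring of $[521]$ in which no two integers of the same color differ by a positive perfect cube.
   Context: For $n\in\mathbb{N}$, $[n]=\{1,\dots,n\}$; a $c$-coloring of $[n]$ is a function $[n]\to[c]$. $R_c(VC)$ (the van der Cube number) is the least positive integer $n$ such that every $c$-coloring of $[n]$ contains integers $a<b$ in $[n]$ of the same color with $b-a=y^3$ for some positive integer $y$. *)

From mathcomp Require Import all_boot.
Set Implicit Arguments. Unset Strict Implicit. Unset Printing Implicit Defensive.

(* A c-coloring of [n] = {1..n}: a function col : nat -> 'I_c; only its values
   on 1..n matter. *)
Definition mono_cube_pair (c : nat) (n : nat) (col : nat -> 'I_c) : Prop :=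
  exists a b y : nat,
    [/\ 1 <= a < b, b <= n, 0 < y, b - a = y ^ 3 & col a = col b].

Definition vc_forced (c n : nat) : Prop :=
  forall col : nat -> 'I_c, mono_cube_pair n col.

Definition is_RVC (c r : nat) : Prop :=
  0 < r /\ vc_forced c r /\ (forall m, 0 < m -> m < r -> ~ vc_forced c m).

Definition RVC_gt (c k : nat) : Prop :=
  forall n, 0 < n -> n <= k -> ~ vc_forced c n.

From mathcomp Require Import all_boot zify.
Set Implicit Arguments. Unset Strict Implicit. Unset Printing Implicit Defensive.

(* With two colours, a colouring of [9] avoiding difference 1 must alternate,
   so 1 and 9 = 1 + 2^3 share a colour; the parity colouring of [8] works
   because 1 is the only cube below 8.  The 3-colouring of [521] is an explicit
   word; only the differences 1^3, ..., 8^3 have to be checked since 9^3 > 521. *)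

Lemma mono_cube_pairW c m n (col : nat -> 'I_c) :
  m <= n -> mono_cube_pair m col -> mono_cube_pair n col.
Proof.
move=> le_mn [a [b [y [ab bm y0 eby eq_col]]]].
by exists a, b, y; split=> //; apply: leq_trans le_mn.
Qed.

Lemma not_vc_forced c m n (col : nat -> 'I_c) :
  m <= n -> ~ mono_cube_pair n col -> ~ vc_forced c m.
Proof. by move=> le_mn free_n /(_ col) /(mono_cube_pairW le_mn). Qed.

Definition cube_freeb c (n K : nat) (col : nat -> 'I_c) : bool :=
  all (fun a => all (fun y => (a + y ^ 3 <= n) ==> (col a != col (a + y ^ 3)))
                    (iota 1 K)) (iota 1 n).

Lemma cube_freebP c n K (col : nat -> 'I_c) :
  n <= K.+1 ^ 3 -> cube_freeb n K col -> ~ mono_cube_pair n col.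
Proof.
move=> nK /allP free [a [b [y [/andP[a_gt0 ab] bn y_gt0 eby eq_col]]]].
have yK : y <= K.
  rewrite leqNgt; apply/negP => Ky.
  have : K.+1 ^ 3 <= y ^ 3 by rewrite leq_exp2r.
  lia.
have a_iota : a \in iota 1 n by rewrite mem_iota a_gt0 add1n ltnS; lia.
have y_iota : y \in iota 1 K by rewrite mem_iota y_gt0 add1n ltnS.
have def_b : a + y ^ 3 = b by lia.
by move: (allP (free a a_iota) y y_iota); rewrite def_b bn eq_col eqxx.
Qed.

Definition parity_coloring (x : nat) : 'I_2 :=
  Ordinal (ltn_pmod (odd x) (isT : 0 < 2)).

Lemma parity_coloring_cube_free : ~ mono_cube_pair 8 parity_coloring.
Proof. by apply: (@cube_freebP _ _ 1); last by vm_compute. Qed.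

Lemma ord2_neq_trans (x y z : 'I_2) : x != y -> y != z -> x = z.
Proof.
case: x y z => [[|[|//]] ?] [[|[|//]] ?] [[|[|//]] ?] //= _ _; exact: val_inj.
Qed.

Lemma vc_forced_2_9 : vc_forced 2 9.
Proof.
move=> col.
have [alt | /forallPn [i /negPn /eqP eq_col]] :=
  boolP [forall i : 'I_8, col i.+1 != col i.+2]; last first.
  have := ltn_ord i; exists i.+1, i.+2, 1; split=> //; lia.
have step i : i < 7 -> col i.+1 = col i.+3.
  move=> i7; apply: ord2_neq_trans.
  - exact: (forallP alt (@Ordinal 8 i (leqW i7))).
  - exact: (forallP alt (@Ordinal 8 i.+1 i7)).
exists 1, 9, 2; split=> //.
by rewrite (step 0) // (step 2) // (step 4) // (step 6).
Qed.

(* Entry x of the word is the colour of x; entry 0 is padding. *)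
Definition word521 : seq nat := [::
  0; 1; 0; 2; 1; 2; 1; 0; 1; 0; 2; 1; 0; 1; 0; 2; 0; 2; 1; 0; 2; 0; 2; 1; 2; 1; 0; 1; 0; 2; 1; 2; 1; 0; 1; 0; 2; 1; 2; 1;
  0; 2; 0; 2; 1; 2; 1; 0; 1; 0; 2; 0; 2; 1; 0; 1; 0; 2; 1; 2; 1; 0; 1; 0; 2; 0; 2; 1; 0; 1; 0; 2; 0; 2; 1; 0; 2; 0; 2; 1;
  2; 1; 0; 2; 1; 2; 1; 0; 1; 0; 1; 0; 2; 1; 2; 1; 0; 1; 0; 2; 1; 0; 1; 0; 2; 0; 2; 1; 0; 1; 0; 2; 0; 2; 1; 2; 1; 0; 2; 0;
  2; 1; 2; 1; 0; 1; 0; 2; 1; 2; 1; 0; 2; 0; 2; 1; 2; 1; 0; 2; 0; 2; 1; 0; 1; 0; 2; 1; 2; 1; 0; 1; 0; 2; 0; 2; 1; 0; 1; 0;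
  2; 0; 2; 1; 0; 2; 0; 2; 1; 2; 1; 0; 2; 0; 2; 1; 2; 1; 0; 1; 0; 2; 0; 2; 1; 0; 1; 0; 2; 0; 2; 1; 0; 1; 0; 2; 1; 2; 1; 0;
  1; 0; 2; 1; 2; 1; 0; 2; 0; 2; 1; 0; 1; 0; 2; 0; 2; 0; 2; 1; 0; 1; 0; 2; 0; 2; 1; 0; 2; 0; 2; 1; 2; 1; 0; 2; 1; 2; 1; 0;
  1; 0; 1; 0; 2; 1; 2; 1; 0; 2; 0; 2; 1; 2; 1; 0; 2; 0; 2; 1; 0; 1; 0; 2; 0; 2; 1; 2; 1; 0; 2; 0; 2; 1; 0; 1; 0; 2; 0; 2;
  1; 2; 1; 0; 2; 0; 2; 1; 2; 1; 0; 2; 1; 2; 1; 0; 1; 0; 2; 1; 0; 1; 0; 2; 0; 2; 0; 2; 1; 0; 1; 0; 2; 0; 2; 1; 0; 1; 0; 2;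
  1; 2; 1; 0; 2; 0; 2; 1; 2; 1; 0; 1; 0; 2; 1; 2; 1; 0; 1; 0; 2; 0; 2; 1; 0; 1; 0; 2; 1; 2; 1; 0; 1; 0; 2; 1; 2; 1; 0; 2;
  0; 2; 1; 0; 1; 0; 2; 0; 2; 1; 2; 1; 0; 2; 0; 2; 1; 2; 1; 0; 2; 0; 2; 1; 0; 1; 0; 2; 1; 2; 1; 0; 1; 0; 2; 0; 2; 1; 2; 1;
  0; 2; 0; 2; 1; 2; 1; 0; 2; 0; 2; 1; 0; 1; 0; 2; 0; 2; 1; 0; 1; 0; 2; 1; 2; 1; 0; 2; 0; 2; 1; 2; 1; 2; 1; 0; 2; 0; 2; 1;
  2; 1; 0; 2; 1; 2; 1; 0; 1; 0; 2; 1; 0; 1; 0; 2; 0; 2; 0; 2; 1; 0; 1; 0; 2; 0; 2; 1; 2; 1; 0; 2; 1; 2; 1; 0; 1; 0; 2; 1;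
  2; 1; 0; 1; 0; 2; 1; 2; 1; 0; 2; 0; 2; 1; 2; 1; 0; 1; 0; 2; 1; 2; 1; 0; 1; 0; 2; 1; 0; 1; 0; 2; 0; 2; 1; 0; 2; 0; 2; 1;
  2; 1].

Definition word_coloring (x : nat) : 'I_3 :=
  Ordinal (ltn_pmod (nth 0 word521 x) (isT : 0 < 3)).

Lemma word_coloring_cube_free : ~ mono_cube_pair 521 word_coloring.
Proof. by apply: (@cube_freebP _ _ 8); last by vm_compute. Qed.

Theorem mainTheorem7 :
  [/\ is_RVC 2 9,
      vc_forced 2 9,
      (exists col : nat -> 'I_2, ~ mono_cube_pair 8 col),
      RVC_gt 3 521
    & exists col : nat -> 'I_3, ~ mono_cube_pair 521 col].
Proof.
split.
- split=> //; split; first exact: vc_forced_2_9.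
  by move=> m _ m9; apply: not_vc_forced parity_coloring_cube_free; rewrite -ltnS.
- exact: vc_forced_2_9.
- by exists parity_coloring; apply: parity_coloring_cube_free.
- by move=> n _ n521; apply: not_vc_forced word_coloring_cube_free.
- by exists word_coloring; apply: word_coloring_cube_free.
Qed.
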